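(* Let $M$ be a timelike surface in $\mathbb{R}^{n,1}$ with a canonical null direction with respect to a constant unit spacelike vector $Z$. Then $\langle II(Z^\top,X),Z^\perp\rangle=0$ for every tangent $X$; equivalently $A_{Z^{\perp}}(Z^{\top})=0$. Moreover $\nabla_{Z^{\top}}Z^{\top}=0$.
   Context: $\mathbb{R}^{n,1}$ is $\mathbb{R}^{n+1}$ with the metric $-dx_1^2+dx_2^2+\dots+dx_{n+1}^2$. A surface is timelike if the induced metric has signature $(1,1)$; a vector $v$ is lightlike if $v\ne0$ and $\langle v,v\rangle=0$. For a constant vector $Z$, $Z=Z^\top+Z^\perp$ along $M$ (tangent and normal parts); $M$ has a canonical null direction with respect to $Z$ if $Z^\top$ is lightlike everywhere on $M$. $\nabla$ is the Levi-Civita connection of $M$, $II$ the second fundamental form, $A_\nu$ the shape operator ($\langle A_\nu X,Y\rangle=\langle II(X,Y),\nu\rangle$). *)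

From Stdlib Require Import Reals.
Open Scope R_scope.

(** Vectors of R^{n,1}: coordinates 0..n of a function nat -> R
    (coordinate 0 is the timelike one; higher coordinates are ignored). *)
Definition vec := nat -> R.

Fixpoint ssum (k : nat) (u v : vec) : R :=
  match k with
  | O => 0
  | S k' => ssum k' u v + u (S k') * v (S k')
  end.

Definition mink (n : nat) (u v : vec) : R := - (u O * v O) + ssum n u v.

Definition lin2 (a b : R) (u v : vec) : vec := fun i => a * u i + b * v i.

Definition vzero (n : nat) (v : vec) : Prop := forall i, (i <= n)%nat -> v i = 0.

Definition lightlike (n : nat) (v : vec) : Prop := ~ vzero n v /\ mink n v v = 0.

(** The induced metric has signature (1,1): there is an
    orthonormal basis of the tangent plane consisting of a timelike and a
    spacelike unit vector (this also forces fs, ft to be independent). *)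
Definition timelike_plane (n : nat) (fs ft : vec) : Prop :=
  exists a1 b1 a2 b2 : R,
    mink n (lin2 a1 b1 fs ft) (lin2 a1 b1 fs ft) = -1 /\
    mink n (lin2 a2 b2 fs ft) (lin2 a2 b2 fs ft) = 1 /\
    mink n (lin2 a1 b1 fs ft) (lin2 a2 b2 fs ft) = 0.

(** The tangent vector W = a fs + b ft with <W,fs> = c1, <W,ft> = c2
    (inverse of the Gram matrix of the induced metric). *)
Definition riesz_a (n : nat) (fs ft : vec) (c1 c2 : R) : R :=
  let E := mink n fs fs in let F := mink n fs ft in let G := mink n ft ft in
  (G * c1 - F * c2) / (E * G - F * F).
Definition riesz_b (n : nat) (fs ft : vec) (c1 c2 : R) : R :=
  let E := mink n fs fs in let F := mink n fs ft in let G := mink n ft ft in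
  (E * c2 - F * c1) / (E * G - F * F).
Definition riesz (n : nat) (fs ft : vec) (c1 c2 : R) : vec :=
  lin2 (riesz_a n fs ft c1 c2) (riesz_b n fs ft c1 c2) fs ft.

Definition tcoef_a (n : nat) (fs ft V : vec) : R := riesz_a n fs ft (mink n V fs) (mink n V ft).
Definition tcoef_b (n : nat) (fs ft V : vec) : R := riesz_b n fs ft (mink n V fs) (mink n V ft).
Definition tproj (n : nat) (fs ft V : vec) : vec := riesz n fs ft (mink n V fs) (mink n V ft).
Definition nproj (n : nat) (fs ft V : vec) : vec := fun i => V i - tproj n fs ft V i.

(** Second fundamental form II(X,Y) = (D_X Y)^perp for X = x1 f_s + x2 f_t,
    Y = y1 f_s + y2 f_t, where fss = d_s f_s, fst = d_t f_s, fts = d_s f_t,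
    ftt = d_t f_t. *)
Definition sff (n : nat) (fs ft fss fst fts ftt : vec) (x1 x2 y1 y2 : R) : vec :=
  nproj n fs ft (fun i => x1 * y1 * fss i + x1 * y2 * fts i
                          + x2 * y1 * fst i + x2 * y2 * ftt i).

(** Shape operator: A_nu X is the tangent vector with
    <A_nu X, Y> = <II(X,Y), nu> for all tangent Y. *)
Definition shape (n : nat) (fs ft fss fst fts ftt nu : vec) (x1 x2 : R) : vec :=
  riesz n fs ft (mink n (sff n fs ft fss fst fts ftt x1 x2 1 0) nu)
                (mink n (sff n fs ft fss fst fts ftt x1 x2 0 1) nu).

Definition open2 (U : R -> R -> Prop) : Prop :=
  forall s t, U s t -> exists eps, 0 < eps /\
    forall s' t', Rabs (s' - s) < eps -> Rabs (t' - t) < eps -> U s' t'.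

Definition cont2_on (U : R -> R -> Prop) (g : R -> R -> R) : Prop :=
  forall s t, U s t -> forall eps, 0 < eps -> exists delta, 0 < delta /\
    forall s' t', Rabs (s' - s) < delta -> Rabs (t' - t) < delta ->
      Rabs (g s' t' - g s t) < eps.

Definition C2_patch (n : nat) (U : R -> R -> Prop) (f fs ft fss fst fts ftt : R -> R -> vec) : Prop :=
  (forall s t, U s t -> forall i, (i <= n)%nat ->
     derivable_pt_lim (fun x => f x t i) s (fs s t i) /\
     derivable_pt_lim (fun y => f s y i) t (ft s t i) /\
     derivable_pt_lim (fun x => fs x t i) s (fss s t i) /\
     derivable_pt_lim (fun y => fs s y i) t (fst s t i) /\
     derivable_pt_lim (fun x => ft x t i) s (fts s t i) /\
     derivable_pt_lim (fun y => ft s y i) t (ftt s t i)) /\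
  (forall i, (i <= n)%nat ->
     cont2_on U (fun s t => fss s t i) /\ cont2_on U (fun s t => fst s t i) /\
     cont2_on U (fun s t => fts s t i) /\ cont2_on U (fun s t => ftt s t i)).

From Coquelicot Require Import Coquelicot.
From Stdlib Require Import Reals Lra Lia.
Open Scope R_scope.

(* Write T = Z^T = a f_s + b f_t.  Since <T, X> = <Z, X> for both coordinate
   fields X, differentiating along a coordinate direction gives
   <dT, X> = <dX, Z^perp>; differentiating <T, T> = 0 gives <dT, T> = 0.
   Expanding T in the second identity and using the first shows
   <II(f_s, T), Z^perp> = <II(f_t, T), Z^perp> = 0 (with f_st = f_ts by
   Schwarz), which is the first claim and, by definition, the second.  The
   first identity then says that the tangential components of D_T T are
   exactly these vanishing quantities. *)

Lemma ssum_sym k u v : ssum k u v = ssum k v u.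
Proof. induction k; simpl; [ring | rewrite IHk; ring]. Qed.

Lemma mink_sym n u v : mink n u v = mink n v u.
Proof. unfold mink. rewrite ssum_sym. ring. Qed.

Lemma ssum_lin2 k a b u v w : ssum k (lin2 a b u v) w = a * ssum k u w + b * ssum k v w.
Proof. induction k; simpl; [ring | rewrite IHk; unfold lin2; ring]. Qed.

Lemma mink_lin2 n a b u v w : mink n (lin2 a b u v) w = a * mink n u w + b * mink n v w.
Proof. unfold mink. rewrite ssum_lin2. unfold lin2. ring. Qed.

Lemma ssum_sub k u v w : ssum k (fun i => u i - v i) w = ssum k u w - ssum k v w.
Proof. induction k; simpl; [ring | rewrite IHk; ring]. Qed.

Lemma mink_sub n u v w : mink n (fun i => u i - v i) w = mink n u w - mink n v w.
Proof. unfold mink. rewrite ssum_sub. ring. Qed.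

Lemma ssum_0 k w : ssum k (fun _ => 0) w = 0.
Proof. induction k; simpl; [ring | rewrite IHk; ring]. Qed.

Lemma mink_0 n w : mink n (fun _ => 0) w = 0.
Proof. unfold mink. rewrite ssum_0. ring. Qed.

Lemma ssum_lin4 k c1 c2 c3 c4 u1 u2 u3 u4 w :
  ssum k (fun i => c1 * u1 i + c2 * u2 i + c3 * u3 i + c4 * u4 i) w =
  c1 * ssum k u1 w + c2 * ssum k u2 w + c3 * ssum k u3 w + c4 * ssum k u4 w.
Proof. induction k; simpl; [ring | rewrite IHk; ring]. Qed.

Lemma mink_lin4 n c1 c2 c3 c4 u1 u2 u3 u4 w :
  mink n (fun i => c1 * u1 i + c2 * u2 i + c3 * u3 i + c4 * u4 i) w =
  c1 * mink n u1 w + c2 * mink n u2 w + c3 * mink n u3 w + c4 * mink n u4 w.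
Proof. unfold mink. rewrite ssum_lin4. ring. Qed.

Lemma ssum_ext n k u u' v v' : (k <= n)%nat ->
  (forall i, (i <= n)%nat -> u i = u' i) -> (forall i, (i <= n)%nat -> v i = v' i) ->
  ssum k u v = ssum k u' v'.
Proof.
  intros Hk Hu Hv. induction k; simpl; [ring |].
  rewrite IHk, Hu, Hv by lia. ring.
Qed.

Lemma mink_ext n u u' v v' :
  (forall i, (i <= n)%nat -> u i = u' i) -> (forall i, (i <= n)%nat -> v i = v' i) ->
  mink n u v = mink n u' v'.
Proof.
  intros Hu Hv. unfold mink. rewrite (ssum_ext n n u u' v v'), Hu, Hv by (auto; lia). ring.
Qed.

Definition gram n (u v : vec) : R := mink n u u * mink n v v - mink n u v * mink n u v.

Lemma mink_lin2_lin2 n a b c d u v :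
  mink n (lin2 a b u v) (lin2 c d u v) =
  a * c * mink n u u + (a * d + b * c) * mink n u v + b * d * mink n v v.
Proof. rewrite mink_lin2, (mink_sym n u), (mink_sym n v), !mink_lin2, (mink_sym n v u). ring. Qed.

Lemma timelike_plane_gram_neq0 n u v : timelike_plane n u v -> gram n u v <> 0.
Proof.
  intros (a1 & b1 & a2 & b2 & H11 & H22 & H12). rewrite !mink_lin2_lin2 in *.
  unfold gram. intro Hg.
  (* Gram determinant of the orthonormal pair = (change of basis det)^2 * gram. *)
  assert (Hdet : (a1 * b2 - a2 * b1) ^ 2 * (mink n u u * mink n v v - mink n u v * mink n u v) =
     (a1 * a1 * mink n u u + (a1 * b1 + b1 * a1) * mink n u v + b1 * b1 * mink n v v) *
     (a2 * a2 * mink n u u + (a2 * b2 + b2 * a2) * mink n u v + b2 * b2 * mink n v v) -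
     (a1 * a2 * mink n u u + (a1 * b2 + b1 * a2) * mink n u v + b1 * b2 * mink n v v) ^ 2)
    by ring.
  rewrite H11, H22, H12, Hg in Hdet. lra.
Qed.

Lemma mink_riesz_l n u v c1 c2 : gram n u v <> 0 -> mink n (riesz n u v c1 c2) u = c1.
Proof.
  unfold gram. intros Hg. unfold riesz, riesz_a, riesz_b. rewrite mink_lin2, (mink_sym n v u).
  field. exact Hg.
Qed.

Lemma mink_riesz_r n u v c1 c2 : gram n u v <> 0 -> mink n (riesz n u v c1 c2) v = c2.
Proof.
  unfold gram. intros Hg. unfold riesz, riesz_a, riesz_b. rewrite mink_lin2.
  field. exact Hg.
Qed.

Lemma riesz_00 n u v i : riesz n u v 0 0 i = 0.
Proof. unfold riesz, lin2, riesz_a, riesz_b. unfold Rdiv. ring. Qed.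

Lemma mink_lin2_nproj n a b u v V :
  gram n u v <> 0 -> mink n (lin2 a b u v) (nproj n u v V) = 0.
Proof.
  intros Hg. rewrite mink_lin2, !(mink_sym n _ (nproj n u v V)). unfold nproj.
  rewrite !mink_sub. unfold tproj. rewrite mink_riesz_l, mink_riesz_r, !(mink_sym n V) by exact Hg.
  ring.
Qed.

Lemma mink_nproj_l n u v V W :
  gram n u v <> 0 -> mink n (nproj n u v W) (nproj n u v V) = mink n W (nproj n u v V).
Proof. intros Hg. unfold nproj at 1. rewrite mink_sub. unfold tproj, riesz. rewrite mink_lin2_nproj by exact Hg. ring. Qed.

Lemma derivable_pt_lim_ssum n (u v : R -> vec) du dv x :
  (forall i, (i <= n)%nat -> derivable_pt_lim (fun y => u y i) x (du i)) ->
  (forall i, (i <= n)%nat -> derivable_pt_lim (fun y => v y i) x (dv i)) ->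
  forall k, (k <= n)%nat ->
  derivable_pt_lim (fun y => ssum k (u y) (v y)) x (ssum k du (v x) + ssum k (u x) dv).
Proof.
  intros Hu Hv k. induction k as [| k IHk]; intros Hk; simpl.
  - replace (0 + 0) with 0 by ring. apply derivable_pt_lim_const.
  - replace (ssum k du (v x) + du (S k) * v x (S k) + (ssum k (u x) dv + u x (S k) * dv (S k)))
      with ((ssum k du (v x) + ssum k (u x) dv) + (du (S k) * v x (S k) + u x (S k) * dv (S k)))
      by ring.
    apply (derivable_pt_lim_plus (fun y => ssum k (u y) (v y)) (fun y => u y (S k) * v y (S k))).
    + apply IHk. lia.
    + apply (derivable_pt_lim_mult (fun y => u y (S k)) (fun y => v y (S k)));
        [apply Hu | apply Hv]; lia.
Qed.

Lemma derivable_pt_lim_mink n (u v : R -> vec) du dv x :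
  (forall i, (i <= n)%nat -> derivable_pt_lim (fun y => u y i) x (du i)) ->
  (forall i, (i <= n)%nat -> derivable_pt_lim (fun y => v y i) x (dv i)) ->
  derivable_pt_lim (fun y => mink n (u y) (v y)) x (mink n du (v x) + mink n (u x) dv).
Proof.
  intros Hu Hv. unfold mink.
  replace (- (du 0%nat * v x 0%nat) + ssum n du (v x) + (- (u x 0%nat * dv 0%nat) + ssum n (u x) dv))
    with (- (du 0%nat * v x 0%nat + u x 0%nat * dv 0%nat) + (ssum n du (v x) + ssum n (u x) dv))
    by ring.
  apply (derivable_pt_lim_plus (fun y => - (u y 0%nat * v y 0%nat)) (fun y => ssum n (u y) (v y))).
  - apply (derivable_pt_lim_opp (fun y => u y 0%nat * v y 0%nat)).
    apply (derivable_pt_lim_mult (fun y => u y 0%nat) (fun y => v y 0%nat)); [apply Hu | apply Hv]; lia.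
  - apply (derivable_pt_lim_ssum n); auto.
Qed.

Lemma ex_derive_Rplus (f g : R -> R) x :
  ex_derive f x -> ex_derive g x -> ex_derive (fun y => f y + g y) x.
Proof. exact (ex_derive_plus f g x). Qed.

Lemma ex_derive_Rminus (f g : R -> R) x :
  ex_derive f x -> ex_derive g x -> ex_derive (fun y => f y - g y) x.
Proof. exact (ex_derive_minus f g x). Qed.

Lemma ex_derive_Ropp (f : R -> R) x : ex_derive f x -> ex_derive (fun y => - f y) x.
Proof. exact (ex_derive_opp f x). Qed.

Lemma ex_derive_ssum n (u v : R -> vec) x :
  (forall i, (i <= n)%nat -> ex_derive (fun y => u y i) x) ->
  (forall i, (i <= n)%nat -> ex_derive (fun y => v y i) x) ->
  forall k, (k <= n)%nat -> ex_derive (fun y => ssum k (u y) (v y)) x.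
Proof.
  intros Hu Hv k. induction k as [| k IHk]; intros Hk; simpl.
  - apply ex_derive_const.
  - apply ex_derive_Rplus; [apply IHk; lia |].
    apply ex_derive_mult; [apply Hu | apply Hv]; lia.
Qed.

Lemma ex_derive_mink n (u v : R -> vec) x :
  (forall i, (i <= n)%nat -> ex_derive (fun y => u y i) x) ->
  (forall i, (i <= n)%nat -> ex_derive (fun y => v y i) x) ->
  ex_derive (fun y => mink n (u y) (v y)) x.
Proof.
  intros Hu Hv. unfold mink. apply ex_derive_Rplus.
  - apply ex_derive_Ropp, ex_derive_mult; [apply Hu | apply Hv]; lia.
  - apply (ex_derive_ssum n); auto.
Qed.

Lemma tproj_derivable n (u v : R -> vec) du dv Z x :
  (forall i, (i <= n)%nat -> derivable_pt_lim (fun y => u y i) x (du i)) ->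
  (forall i, (i <= n)%nat -> derivable_pt_lim (fun y => v y i) x (dv i)) ->
  gram n (u x) (v x) <> 0 ->
  exists W : vec, forall i, (i <= n)%nat ->
    derivable_pt_lim (fun y => tproj n (u y) (v y) Z i) x (W i).
Proof.
  intros Hu Hv Hg. exists (fun i => Derive (fun y => tproj n (u y) (v y) Z i) x).
  intros i Hi. apply is_derive_Reals, Derive_correct.
  assert (HU : forall j, (j <= n)%nat -> ex_derive (fun y => u y j) x)
    by (intros j Hj; exists (du j); apply is_derive_Reals, Hu, Hj).
  assert (HV : forall j, (j <= n)%nat -> ex_derive (fun y => v y j) x)
    by (intros j Hj; exists (dv j); apply is_derive_Reals, Hv, Hj).
  assert (HZ : forall j, (j <= n)%nat -> ex_derive (fun _ : R => Z j) x)
    by (intros; apply ex_derive_const).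
  unfold gram in Hg. unfold tproj, riesz, lin2, riesz_a, riesz_b.
  apply ex_derive_Rplus; apply ex_derive_mult; [| exact (HU i Hi) | | exact (HV i Hi)];
    (apply ex_derive_div; [| | exact Hg]); apply ex_derive_Rminus;
    apply ex_derive_mult; apply ex_derive_mink; first [exact HU | exact HV | exact HZ].
Qed.

Lemma derivable_pt_lim_locally_unique (f g : R -> R) x l1 l2 :
  locally x (fun y => f y = g y) ->
  derivable_pt_lim f x l1 -> derivable_pt_lim g x l2 -> l1 = l2.
Proof.
  intros Hfg Hf Hg. apply is_derive_Reals in Hf, Hg.
  rewrite <- (is_derive_unique g x l2 Hg).
  exact (eq_sym (is_derive_unique g x l1 (is_derive_ext_loc f g x l1 Hfg Hf))).
Qed.

Lemma mink_deriv_of_locally_eq n (T w : R -> vec) W dw Z x :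
  locally x (fun y => mink n (T y) (w y) = mink n Z (w y)) ->
  (forall i, (i <= n)%nat -> derivable_pt_lim (fun y => T y i) x (W i)) ->
  (forall i, (i <= n)%nat -> derivable_pt_lim (fun y => w y i) x (dw i)) ->
  mink n W (w x) = mink n dw (fun i => Z i - T x i).
Proof.
  intros Heq HT Hw.
  assert (E := derivable_pt_lim_locally_unique _ _ x _ _ Heq (derivable_pt_lim_mink n T w W dw x HT Hw)
     (derivable_pt_lim_mink n (fun _ => Z) w (fun _ => 0) dw x
        (fun i _ => derivable_pt_lim_const (Z i) x) Hw)).
  rewrite mink_0 in E. rewrite (mink_sym n dw), mink_sub. lra.
Qed.

Lemma mink_deriv_of_locally_null n (T : R -> vec) W x :
  locally x (fun y => mink n (T y) (T y) = 0) ->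
  (forall i, (i <= n)%nat -> derivable_pt_lim (fun y => T y i) x (W i)) ->
  mink n W (T x) = 0.
Proof.
  intros Hnull HT.
  assert (E := derivable_pt_lim_locally_unique _ _ x _ _ Hnull (derivable_pt_lim_mink n T T W W x HT HT)
     (derivable_pt_lim_const 0 x)).
  rewrite (mink_sym n (T x) W) in E. lra.
Qed.

Lemma tproj_deriv_along n (u v : R -> vec) du dv Z x :
  locally x (fun y => gram n (u y) (v y) <> 0) ->
  locally x (fun y => mink n (tproj n (u y) (v y) Z) (tproj n (u y) (v y) Z) = 0) ->
  (forall i, (i <= n)%nat -> derivable_pt_lim (fun y => u y i) x (du i)) ->
  (forall i, (i <= n)%nat -> derivable_pt_lim (fun y => v y i) x (dv i)) ->
  exists W : vec,
    (forall i, (i <= n)%nat -> derivable_pt_lim (fun y => tproj n (u y) (v y) Z i) x (W i)) /\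
    mink n W (u x) = mink n du (nproj n (u x) (v x) Z) /\
    mink n W (v x) = mink n dv (nproj n (u x) (v x) Z) /\
    tcoef_a n (u x) (v x) Z * mink n du (nproj n (u x) (v x) Z) +
    tcoef_b n (u x) (v x) Z * mink n dv (nproj n (u x) (v x) Z) = 0.
Proof.
  intros Hg Hnull Hu Hv.
  destruct (tproj_derivable n u v du dv Z x Hu Hv (locally_singleton _ _ Hg)) as [W HW].
  set (Zperp := nproj n (u x) (v x) Z).
  assert (Hwu : mink n W (u x) = mink n du Zperp).
  { apply (mink_deriv_of_locally_eq n (fun y => tproj n (u y) (v y) Z)); auto.
    apply (filter_imp _ _ (fun y Hy => mink_riesz_l n (u y) (v y) _ _ Hy) Hg). }
  assert (Hwv : mink n W (v x) = mink n dv Zperp).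
  { apply (mink_deriv_of_locally_eq n (fun y => tproj n (u y) (v y) Z)); auto.
    apply (filter_imp _ _ (fun y Hy => mink_riesz_r n (u y) (v y) _ _ Hy) Hg). }
  exists W. split; [exact HW | split; [exact Hwu | split; [exact Hwv |]]].
  rewrite <- Hwu, <- Hwv, !(mink_sym n W), <- mink_lin2, mink_sym.
  exact (mink_deriv_of_locally_null n (fun y => tproj n (u y) (v y) Z) W x Hnull HW).
Qed.

Lemma open2_locally_2d U s t : open2 U -> U s t -> locally_2d U s t.
Proof. intros Ho HU. destruct (Ho s t HU) as (e & He & H). exists (mkposreal e He). exact H. Qed.

Lemma cont2_on_continuity_2d_pt U g s t : cont2_on U g -> U s t -> continuity_2d_pt g s t.
Proof.
  intros Hc HU eps. destruct (Hc s t HU eps (cond_pos eps)) as (d & Hd & H).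
  exists (mkposreal d Hd). exact H.
Qed.

Lemma open2_mixed_partials_sym U (F Fs Ft Fst Fts : R -> R -> R) s t :
  open2 U -> U s t ->
  (forall u v, U u v ->
     derivable_pt_lim (fun x => F x v) u (Fs u v) /\ derivable_pt_lim (fun y => F u y) v (Ft u v) /\
     derivable_pt_lim (fun y => Fs u y) v (Fst u v) /\ derivable_pt_lim (fun x => Ft x v) u (Fts u v)) ->
  cont2_on U Fst -> cont2_on U Fts -> Fst s t = Fts s t.
Proof.
  intros Ho HU HD Cst Cts.
  assert (Hnear : forall P : R -> R -> Prop, (forall u v, U u v -> P u v) ->
            forall u v, U u v -> locally_2d P u v).
  { intros P HP u v H. exact (locally_2d_impl U P u v (locally_2d_forall _ u v HP)
                                (open2_locally_2d U u v Ho H)). }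
  assert (DFt : forall u v, U u v -> Derive (fun y => F u y) v = Ft u v).
  { intros u v H. apply is_derive_unique, is_derive_Reals, HD, H. }
  assert (DFs : forall u v, U u v -> Derive (fun x => F x v) u = Fs u v).
  { intros u v H. apply is_derive_unique, is_derive_Reals, HD, H. }
  assert (DFts : forall u v, U u v -> is_derive (fun z => Derive (fun y => F z y) v) u (Fts u v)).
  { intros u v H. apply (is_derive_ext_loc (fun z => Ft z v)).
    - apply (locally_2d_1d_const_y (fun z w => Ft z w = Derive (fun y => F z y) w)).
      apply Hnear; [| exact H]. intros z w Hzw. symmetry. apply DFt, Hzw.
    - apply is_derive_Reals, HD, H. }
  assert (DFst : forall u v, U u v -> is_derive (fun z => Derive (fun y => F y z) u) v (Fst u v)).
  { intros u v H. apply (is_derive_ext_loc (fun z => Fs u z)).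
    - apply (locally_2d_1d_const_x (fun z w => Fs z w = Derive (fun y => F y w) z)).
      apply Hnear; [| exact H]. intros z w Hzw. symmetry. apply DFs, Hzw.
    - apply is_derive_Reals, HD, H. }
  rewrite <- (is_derive_unique _ _ _ (DFts s t HU)), <- (is_derive_unique _ _ _ (DFst s t HU)).
  symmetry. apply Schwarz.
  - apply Hnear; auto. intros u v H.
    repeat split; eexists; [apply is_derive_Reals, HD, H | apply is_derive_Reals, HD, H
                           | apply DFts, H | apply DFst, H].
  - apply (continuity_2d_pt_ext_loc Fts); [| exact (cont2_on_continuity_2d_pt U Fts s t Cts HU)].
    apply Hnear; auto. intros u v H. symmetry. apply is_derive_unique, DFts, H.
  - apply (continuity_2d_pt_ext_loc Fst); [| exact (cont2_on_continuity_2d_pt U Fst s t Cst HU)].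
    apply Hnear; auto. intros u v H. symmetry. apply is_derive_unique, DFst, H.
Qed.

Lemma C2_patch_mixed_partials_sym n U f fs ft fss fst fts ftt s t :
  open2 U -> C2_patch n U f fs ft fss fst fts ftt -> U s t ->
  forall i, (i <= n)%nat -> fst s t i = fts s t i.
Proof.
  intros Ho [HD HC] HU i Hi.
  apply (open2_mixed_partials_sym U (fun x y => f x y i) (fun x y => fs x y i)
           (fun x y => ft x y i) (fun x y => fst x y i) (fun x y => fts x y i) s t Ho HU);
    [| apply HC, Hi | apply HC, Hi].
  intros u v H. destruct (HD u v H i Hi) as (? & ? & ? & ? & ? & ?). auto.
Qed.

Theorem mainTheorem2 (n : nat) (U : R -> R -> Prop)
  (f fs ft fss fst fts ftt : R -> R -> vec) (Z : vec) :
  open2 U ->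
  C2_patch n U f fs ft fss fst fts ftt ->
  (forall s t, U s t -> timelike_plane n (fs s t) (ft s t)) ->
  mink n Z Z = 1 ->
  (forall s t, U s t -> lightlike n (tproj n (fs s t) (ft s t) Z)) ->
  forall s t, U s t ->
    let p := fs s t in let q := ft s t in
    let a := tcoef_a n p q Z in let b := tcoef_b n p q Z in
    let Zperp := nproj n p q Z in
    (forall x1 x2 : R,
       mink n (sff n p q (fss s t) (fst s t) (fts s t) (ftt s t) a b x1 x2) Zperp = 0) /\
    vzero n (shape n p q (fss s t) (fst s t) (fts s t) (ftt s t) Zperp a b) /\
    (exists Ws Wt : vec,
       (forall i, (i <= n)%nat ->
          derivable_pt_lim (fun x => tproj n (fs x t) (ft x t) Z i) s (Ws i) /\
          derivable_pt_lim (fun y => tproj n (fs s y) (ft s y) Z i) t (Wt i)) /\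
       vzero n (tproj n p q (lin2 a b Ws Wt))).
Proof.
  intros Ho HC2 Htl _ Hnull s t HU. cbv zeta. pose proof HC2 as [HD _].
  assert (Hgram : forall x y, U x y -> gram n (fs x y) (ft x y) <> 0)
    by (intros x y H; apply timelike_plane_gram_neq0, Htl, H).
  pose proof (locally_2d_1d_const_y U s t (open2_locally_2d U s t Ho HU)) as Hrow.
  pose proof (locally_2d_1d_const_x U s t (open2_locally_2d U s t Ho HU)) as Hcol.
  assert (Hds : forall i, (i <= n)%nat ->
            derivable_pt_lim (fun x => fs x t i) s (fss s t i) /\
            derivable_pt_lim (fun x => ft x t i) s (fts s t i))
    by (intros i Hi; destruct (HD s t HU i Hi) as (_ & _ & ? & _ & ? & _); auto).
  assert (Hdt : forall i, (i <= n)%nat ->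
            derivable_pt_lim (fun y => fs s y i) t (fst s t i) /\
            derivable_pt_lim (fun y => ft s y i) t (ftt s t i))
    by (intros i Hi; destruct (HD s t HU i Hi) as (_ & _ & _ & ? & _ & ?); auto).
  destruct (tproj_deriv_along n (fun x => fs x t) (fun x => ft x t) _ _ Z s
              (filter_imp _ _ (fun x Hx => Hgram x t Hx) Hrow)
              (filter_imp _ _ (fun x Hx => proj2 (Hnull x t Hx)) Hrow)
              (fun i Hi => proj1 (Hds i Hi)) (fun i Hi => proj2 (Hds i Hi)))
    as (Ws & HWs & Hss & Hst & Hs0).
  destruct (tproj_deriv_along n (fun y => fs s y) (fun y => ft s y) _ _ Z t
              (filter_imp _ _ (fun y Hy => Hgram s y Hy) Hcol)
              (filter_imp _ _ (fun y Hy => proj2 (Hnull s y Hy)) Hcol)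
              (fun i Hi => proj1 (Hdt i Hi)) (fun i Hi => proj2 (Hdt i Hi)))
    as (Wt & HWt & Hts & Htt & Ht0).
  cbv beta in *.
  set (a := tcoef_a n (fs s t) (ft s t) Z) in *.
  set (b := tcoef_b n (fs s t) (ft s t) Z) in *.
  set (Zperp := nproj n (fs s t) (ft s t) Z) in *.
  assert (Hsym : mink n (fst s t) Zperp = mink n (fts s t) Zperp).
  { apply mink_ext; [exact (C2_patch_mixed_partials_sym n U f fs ft fss fst fts ftt s t Ho HC2 HU) |].
    reflexivity. }
  rewrite Hsym in Ht0.
  assert (Hsff : forall x1 x2,
            mink n (sff n (fs s t) (ft s t) (fss s t) (fst s t) (fts s t) (ftt s t) a b x1 x2) Zperp = 0).
  { intros x1 x2. unfold sff, Zperp. rewrite mink_nproj_l, mink_lin4 by apply Hgram, HU.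
    fold Zperp. rewrite Hsym.
    transitivity (x1 * (a * mink n (fss s t) Zperp + b * mink n (fts s t) Zperp) +
                  x2 * (a * mink n (fts s t) Zperp + b * mink n (ftt s t) Zperp)); [ring |].
    rewrite Hs0, Ht0. ring. }
  split; [exact Hsff | split].
  - intros i _. unfold shape. rewrite !Hsff. apply riesz_00.
  - exists Ws, Wt. split; [intros i Hi; split; [apply HWs | apply HWt]; exact Hi |].
    intros i _. unfold tproj. rewrite !mink_lin2, Hss, Hst, Hts, Htt, Hsym, Hs0, Ht0.
    apply riesz_00.
Qed.
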